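(* Let $G$, $P$, $w$ be as in the context and let $s,t\in V$, $s\ne t$, with at least one directed path from $s$ to $t$ in $G$. For $m\in V\setminus\{t\}$ consider $\lim_{\alpha\to0^+}F^{\{t,\overline{o}\}}_{sm}(\alpha)$ in the evaporating network $G_\alpha$. Then: (a) if $\lim_{\alpha\to0^+}F^{\{t,\overline{o}\}}_{sm}(\alpha)=0$, no shortest (minimum-cost) path from $s$ to $t$ passes through $m$; (b) if $\lim_{\alpha\to0^+}F^{\{t,\overline{o}\}}_{sm}(\alpha)=1$, $m$ lies on every shortest path from $s$ to $t$; (c) if $0<\lim_{\alpha\to0^+}F^{\{t,\overline{o}\}}_{sm}(\alpha)<1$, $m$ lies on at least one but not all shortest paths from $s$ to $t$; (d) there is more than one shortest path from $s$ to $t$ if and only if there exists $m$ with $0<\lim_{\alpha\to0^+}F^{\{t,\overline{o}\}}_{sm}(\alpha)<1$.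
   Context: $G=(V,E)$ is a finite directed graph; each edge $e_{ij}\in E$ has a positive cost $w_{ij}$. $P$ is a row-stochastic transition matrix with $P_{ij}>0$ iff $e_{ij}\in E$. Shortest paths are directed paths of minimum total cost. Evaporating network $G_\alpha$ ($0<\alpha<1$): Markov chain on $V\cup\{o\}$ with $P_{ij}(\alpha)=P_{ij}\alpha^{w_{ij}}$ ($i,j\in V$), $P_{io}(\alpha)=1-\sum_jP_{ij}\alpha^{w_{ij}}$, $o$ absorbing. Making $t$ and $o$ absorbing, with $\mathcal T=V\setminus\{t\}$, let $Q_x^{\{t,\overline o\}}(\alpha)$ be the probability that the chain from $x$ is absorbed at $t$, and $F^{\{t,o\}}(\alpha)=(I-P(\alpha)_{\mathcal T\mathcal T})^{-1}$. The avoidance fundamental matrix is $F^{\{t,\overline{o}\}}_{sm}(\alpha)=F^{\{t,o\}}_{sm}(\alpha)\,Q_m^{\{t,\overline o\}}(\alpha)/Q_s^{\{t,\overline o\}}(\alpha)$ for $s,m\in\mathcal T$ (the expected number of visits to $m$ from $s$ conditioned on absorption at $t$). *)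

From Stdlib Require Import Reals List Arith.
Import ListNotations.
Open Scope R_scope.

(* Vertices are the naturals 0 .. n-1. *)

Fixpoint fsum (n : nat) (f : nat -> R) : R :=
  match n with
  | O => 0
  | S k => fsum k f + f k
  end.

Definition sumT (n t : nat) (f : nat -> R) : R :=
  fsum n (fun k => if Nat.eqb k t then 0 else f k).

Definition kdelta (i j : nat) : R := if Nat.eqb i j then 1 else 0.

Definition edge (P : nat -> nat -> R) (i j : nat) : Prop := 0 < P i j.

(* transition probabilities of the evaporating network: P_ij alpha^{w_ij} *)
Definition Palpha (P w : nat -> nat -> R) (a : R) (i j : nat) : R :=
  P i j * Rpower a (w i j).

Fixpoint chain (P : nat -> nat -> R) (l : list nat) : Prop :=
  match l with
  | x :: ((y :: _) as l') => edge P x y /\ chain P l'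
  | _ => True
  end.

Fixpoint cost (w : nat -> nat -> R) (l : list nat) : R :=
  match l with
  | x :: ((y :: _) as l') => w x y + cost w l'
  | _ => 0
  end.

Definition is_path (n : nat) (P : nat -> nat -> R) (s t : nat) (p : list nat) : Prop :=
  (exists rest, p = s :: rest) /\ last p s = t /\ NoDup p /\
  Forall (fun v => (v < n)%nat) p /\ chain P p.

Definition shortest_path (n : nat) (P w : nat -> nat -> R) (s t : nat) (p : list nat) : Prop :=
  is_path n P s t p /\ forall q, is_path n P s t q -> cost w p <= cost w q.

(* F alpha is the two-sided inverse of I - P(alpha)_{TT}, i.e. F^{t,o}(alpha) *)
Definition is_fundamental (n t : nat) (P w : nat -> nat -> R) (F : R -> nat -> nat -> R) : Prop :=
  forall a, 0 < a < 1 -> forall i j, (i < n)%nat -> (j < n)%nat -> i <> t -> j <> t ->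
    sumT n t (fun k => (kdelta i k - Palpha P w a i k) * F a k j) = kdelta i j /\
    sumT n t (fun k => F a i k * (kdelta k j - Palpha P w a k j)) = kdelta i j.

(* Q alpha x = probability of absorption at t (not o) starting from x in T:
   the solution of the first-step (harmonic) equations with Q_t = 1, Q_o = 0. *)
Definition is_absorb_t (n t : nat) (P w : nat -> nat -> R) (Q : R -> nat -> R) : Prop :=
  forall a, 0 < a < 1 -> forall x, (x < n)%nat -> x <> t ->
    Q a x = sumT n t (fun y => Palpha P w a x y * Q a y) + Palpha P w a x t.

Definition Favoid (F : R -> nat -> nat -> R) (Q : R -> nat -> R) (s m : nat) (a : R) : R :=
  F a s m * Q a m / Q a s.

Definition lim0plus (f : R -> R) (L : R) : Prop :=
  limit1_in f (fun a => 0 < a < 1) L 0.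

From Stdlib Require Import Reals List Arith Lra Lia ListDec Classical.
Import ListNotations.
Open Scope R_scope.

(* Both Q_s(α) and F_sm(α) Q_m(α) expand over the walks from s to t through T: a walk contributes
   its P-weight times α^(its cost), and in the second expansion also times its number of visits
   to m.  Truncating the expansions after K steps costs O(α^(wmin K)) by a maximum principle, so
   after division by α^D, D the shortest distance, both converge to sums over the walks of cost
   exactly D.  These are the shortest paths, which visit m at most once; hence the avoidance limit
   is W_in / (W_in + W_out), the P-weights of the shortest paths through and avoiding m.
   Two distinct shortest paths differ in some vertex: where they branch, if each continued
   through a later vertex of the other, shortcutting to it would make both branch edges
   strictly cheaper than each other. *)

Definition lsum {A} (f : A -> R) (L : list A) : R :=
  fold_right (fun x acc => f x + acc) 0 L.

Lemma lsum_app {A} (f : A -> R) L1 L2 : lsum f (L1 ++ L2) = lsum f L1 + lsum f L2.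
Proof. induction L1; simpl; [ring | rewrite IHL1; ring]. Qed.

Lemma lsum_ext {A} (f g : A -> R) L :
  (forall x, In x L -> f x = g x) -> lsum f L = lsum g L.
Proof. induction L; simpl; intros H; auto. rewrite H, IHL; auto. Qed.

Lemma lsum_le {A} (f g : A -> R) L :
  (forall x, In x L -> f x <= g x) -> lsum f L <= lsum g L.
Proof.
  induction L; simpl; intros H; [lra |].
  pose proof (H a (or_introl eq_refl)). pose proof (IHL (fun x h => H x (or_intror h))). lra.
Qed.

Lemma lsum_nonneg {A} (f : A -> R) L : (forall x, In x L -> 0 <= f x) -> 0 <= lsum f L.
Proof.
  induction L; simpl; intros H; [lra |].
  pose proof (H a (or_introl eq_refl)). pose proof (IHL (fun x h => H x (or_intror h))). lra.
Qed.

Lemma lsum_abs_le {A} (f g : A -> R) L :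
  (forall x, In x L -> Rabs (f x) <= g x) -> Rabs (lsum f L) <= lsum g L.
Proof.
  induction L; simpl; intros H; [rewrite Rabs_R0; lra |].
  pose proof (H a (or_introl eq_refl)). pose proof (IHL (fun x h => H x (or_intror h))).
  pose proof (Rabs_triang (f a) (lsum f L)). lra.
Qed.

Lemma lsum_plus {A} (f g : A -> R) L : lsum (fun x => f x + g x) L = lsum f L + lsum g L.
Proof. induction L; simpl; [ring | rewrite IHL; ring]. Qed.

Lemma lsum_minus {A} (f g : A -> R) L : lsum (fun x => f x - g x) L = lsum f L - lsum g L.
Proof. induction L; simpl; [ring | rewrite IHL; ring]. Qed.

Lemma lsum_scal {A} (c : R) (f : A -> R) L : lsum (fun x => c * f x) L = c * lsum f L.
Proof. induction L; simpl; [ring | rewrite IHL; ring]. Qed.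

Lemma lsum_map {A B} (f : B -> R) (g : A -> B) L : lsum f (map g L) = lsum (fun x => f (g x)) L.
Proof. induction L; simpl; auto. now rewrite IHL. Qed.

Lemma lsum_flat_map {A B} (f : B -> R) (g : A -> list B) L :
  lsum f (flat_map g L) = lsum (fun x => lsum f (g x)) L.
Proof. induction L; simpl; auto. now rewrite lsum_app, IHL. Qed.

Lemma lsum_term_le {A} (f : A -> R) L x :
  (forall y, In y L -> 0 <= f y) -> In x L -> f x <= lsum f L.
Proof.
  induction L; simpl; intros H Hx; [contradiction |].
  destruct Hx as [<- | Hx].
  - pose proof (lsum_nonneg f L (fun y h => H y (or_intror h))). lra.
  - pose proof (H a (or_introl eq_refl)). pose proof (IHL (fun y h => H y (or_intror h)) Hx). lra.
Qed.

Lemma lsum_neq0_term {A} (f : A -> R) L : lsum f L <> 0 -> exists x, In x L /\ f x <> 0.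
Proof.
  induction L; simpl; intros H; [lra |].
  destruct (Req_dec (f a) 0) as [e | e].
  - destruct IHL as [x [h1 h2]]; [lra | eauto].
  - eauto.
Qed.

Lemma finite_argmin {A} (L : list A) (Pr : A -> Prop) (f : A -> R) x0 :
  In x0 L -> Pr x0 -> exists x, In x L /\ Pr x /\ forall y, In y L -> Pr y -> f x <= f y.
Proof.
  revert x0; induction L as [| a L IH]; simpl; intros x0 Hx0 Px0; [contradiction |].
  destruct (classic (exists x, In x L /\ Pr x)) as [[x1 [h1 p1]] | none].
  - destruct (IH x1 h1 p1) as [x [ix [px hx]]].
    destruct (classic (Pr a /\ f a < f x)) as [[pa lt] | nlt].
    + exists a. repeat split; auto. intros y [<- | hy] py; [lra |]. specialize (hx y hy py). lra.
    + exists x. repeat split; auto. intros y [<- | hy] py; auto.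
      apply Rnot_lt_le. intro. apply nlt. auto.
  - destruct Hx0 as [<- | Hx0]; [| exfalso; eauto].
    exists a. repeat split; auto. intros y [<- | hy] py; [lra | exfalso; eauto].
Qed.

Lemma lsum_kdelta (L : list nat) x (g : nat -> R) :
  lsum (fun k => kdelta x k * g k) L = INR (count_occ Nat.eq_dec L x) * g x.
Proof.
  induction L as [| k L IH]; simpl; [ring |]. rewrite IH. unfold kdelta.
  destruct (Nat.eqb_spec x k), (Nat.eq_dec k x); subst; try congruence; rewrite ?S_INR; ring.
Qed.

Lemma kdelta_mult (x m : nat) (f : nat -> R) : kdelta x m * f m = kdelta x m * f x.
Proof. unfold kdelta. destruct (Nat.eqb_spec x m); subst; ring. Qed.

Lemma Rabs_kdelta_le x m : Rabs (kdelta x m) <= 1.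
Proof. unfold kdelta. destruct (x =? m)%nat; rewrite ?Rabs_R1, ?Rabs_R0; lra. Qed.

Lemma fsum_lsum n f : fsum n f = lsum f (seq 0 n).
Proof.
  induction n; [reflexivity |]. simpl fsum. rewrite seq_S, lsum_app, IHn. simpl. ring.
Qed.

Lemma fsum_term_le n f y : (forall z, (z < n)%nat -> 0 <= f z) -> (y < n)%nat -> f y <= fsum n f.
Proof.
  intros H hy. rewrite fsum_lsum. apply lsum_term_le; [| apply in_seq; lia].
  intros z hz. apply in_seq in hz. apply H. lia.
Qed.

Definition Tlist (n t : nat) : list nat := filter (fun k => negb (Nat.eqb k t)) (seq 0 n).

Lemma In_Tlist n t x : In x (Tlist n t) <-> (x < n)%nat /\ x <> t.
Proof. unfold Tlist. rewrite filter_In, in_seq, Bool.negb_true_iff, Nat.eqb_neq. lia. Qed.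

Lemma sumT_lsum n t f : sumT n t f = lsum f (Tlist n t).
Proof.
  unfold sumT, Tlist. rewrite fsum_lsum. generalize (seq 0 n) as L.
  induction L as [| x L IH]; simpl; [reflexivity |].
  rewrite IH. destruct (x =? t)%nat; simpl; ring.
Qed.

Lemma sumT_le_fsum n t f : (forall y, (y < n)%nat -> 0 <= f y) -> sumT n t f <= fsum n f.
Proof.
  intros H. unfold sumT. rewrite !fsum_lsum. apply lsum_le. intros y hy. apply in_seq in hy.
  destruct (y =? t)%nat; [apply H; lia | lra].
Qed.

Lemma sumT_kdelta n t x (g : nat -> R) :
  In x (Tlist n t) -> sumT n t (fun k => kdelta x k * g k) = g x.
Proof.
  intros hx. rewrite sumT_lsum, lsum_kdelta.
  assert (ND : NoDup (Tlist n t)) by apply NoDup_filter, seq_NoDup.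
  rewrite (proj1 (NoDup_count_occ' Nat.eq_dec _) ND x hx). simpl. ring.
Qed.

Lemma last_app_cons {A} (a : list A) y c d : last (a ++ y :: c) d = last (y :: c) d.
Proof.
  induction a as [| z a IH]; [reflexivity |]. rewrite <- IH.
  simpl. destruct (a ++ y :: c) eqn:E; [destruct a; discriminate | reflexivity].
Qed.

Lemma last_In {A} (l : list A) d : l <> [] -> In (last l d) l.
Proof.
  intros h. rewrite (app_removelast_last d h) at 2. apply in_or_app. right. now left.
Qed.

Lemma list_divergence {A} (x : A) l1 l2 : x :: l1 <> x :: l2 ->
  (exists B u v1 v2 r1 r2, x :: l1 = B ++ u :: v1 :: r1 /\ x :: l2 = B ++ u :: v2 :: r2 /\ v1 <> v2) \/
  (exists r, r <> [] /\ (l2 = l1 ++ r \/ l1 = l2 ++ r)).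
Proof.
  revert x l2; induction l1 as [| v1 l1 IH]; intros x l2 ne.
  - right. exists l2. split; [intros ->; auto | now left].
  - destruct l2 as [| v2 l2]; [right; exists (v1 :: l1); split; [discriminate | now right] |].
    destruct (classic (v1 = v2)) as [<- | nv].
    + assert (ne' : v1 :: l1 <> v1 :: l2) by (intros e; apply ne; now rewrite e).
      destruct (IH v1 l2 ne') as [[B [u [w1 [w2 [r1 [r2 [e1 [e2 nw]]]]]]]] | [r [hr [e | e]]]].
      * left. exists (x :: B), u, w1, w2, r1, r2. simpl. rewrite <- e1, <- e2. auto.
      * right. exists r. split; auto. left. simpl. now rewrite e.
      * right. exists r. split; auto. right. simpl. now rewrite e.
    + left. exists [], x, v1, v2, l1, l2. auto.
Qed.

Fixpoint lists_lt {A} (E : list A) (K : nat) : list (list A) :=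
  match K with
  | O => []
  | S K => [] :: flat_map (fun y => map (cons y) (lists_lt E K)) E
  end.

Lemma In_lists_lt {A} (E : list A) K l : In l (lists_lt E K) <-> (length l < K)%nat /\ incl l E.
Proof.
  revert l; induction K as [| K IH]; intros l; simpl; [split; [tauto | lia] |].
  rewrite in_flat_map. split.
  - intros [<- | [y [hy hl]]]; [split; [simpl; lia | intros ? []] |].
    apply in_map_iff in hl as [l' [<- hl']]. apply IH in hl' as [h1 h2].
    split; [simpl; lia |]. now apply incl_cons.
  - intros [h1 h2]. destruct l as [| y l]; [auto | right].
    exists y. split; [apply h2; now left |]. apply in_map, IH.
    split; [simpl in h1; lia |]. eapply incl_cons_inv, h2.
Qed.

Lemma lsum_lists_lt_S {A} (g : list A -> R) (E : list A) K :
  lsum g (lists_lt E (S K)) = g [] + lsum (fun y => lsum (fun l => g (y :: l)) (lists_lt E K)) E.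
Proof.
  simpl lists_lt. simpl lsum at 1. rewrite lsum_flat_map. f_equal.
  apply lsum_ext. intros y _. apply lsum_map.
Qed.

Lemma INR_count_occ_cons (x m : nat) l :
  INR (count_occ Nat.eq_dec (x :: l) m) = kdelta x m + INR (count_occ Nat.eq_dec l m).
Proof.
  simpl. unfold kdelta. destruct (Nat.eq_dec x m), (Nat.eqb_spec x m); try congruence.
  - rewrite S_INR. ring.
  - ring.
Qed.

Fixpoint path_weight (f : nat -> nat -> R) (l : list nat) : R :=
  match l with
  | x :: ((y :: _) as l') => f x y * path_weight f l'
  | _ => 1
  end.

Lemma cost_app_cons w a y c : cost w (a ++ y :: c) = cost w (a ++ [y]) + cost w (y :: c).
Proof.
  induction a as [| z a IH]; [simpl; ring |].
  destruct a as [| z' a']; simpl in *; [ring | rewrite IH; ring].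
Qed.

Lemma chain_app_cons P a y c : chain P (a ++ y :: c) <-> chain P (a ++ [y]) /\ chain P (y :: c).
Proof.
  induction a as [| z a IH]; [simpl; tauto |].
  destruct a as [| z' a']; simpl in *; [tauto | rewrite IH; tauto].
Qed.

Lemma path_weight_Palpha P w a l :
  0 < a -> path_weight (Palpha P w a) l = path_weight P l * Rpower a (cost w l).
Proof.
  intros ha. induction l as [| x [| y l] IH]; simpl; try (rewrite Rpower_O; auto; ring).
  simpl in IH. rewrite IH. unfold Palpha. rewrite Rpower_plus. ring.
Qed.

Section PathWeight.

Variables (n : nat) (P : nat -> nat -> R).

Lemma path_weight_pos l : chain P l -> 0 < path_weight P l.
Proof.
  induction l as [| x [| y l] IH]; simpl; try lra.
  intros [e c]. unfold edge in e. pose proof (IH c). now apply Rmult_lt_0_compat.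
Qed.

Hypothesis P_nonneg : forall i j, (i < n)%nat -> (j < n)%nat -> 0 <= P i j.

Lemma path_weight_nonneg l : Forall (fun v => (v < n)%nat) l -> 0 <= path_weight P l.
Proof.
  induction l as [| x [| y l] IH]; simpl; try lra.
  intros F. inversion F as [| ? ? hx F']. inversion F'; subst.
  apply Rmult_le_pos; auto.
Qed.

Lemma chain_of_path_weight_neq0 l :
  Forall (fun v => (v < n)%nat) l -> path_weight P l <> 0 -> chain P l.
Proof.
  induction l as [| x [| y l] IH]; simpl; auto.
  intros F hne. inversion F as [| ? ? hx F']. inversion F'; subst.
  split.
  - unfold edge. destruct (P_nonneg x y) as [lt | e]; auto. rewrite <- e in hne. lra.
  - apply IH; auto. intro h. apply hne. simpl in h. rewrite h. ring.
Qed.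

End PathWeight.

Definition is_walk (n : nat) (P : nat -> nat -> R) (s t : nat) (W : list nat) : Prop :=
  (exists rest, W = s :: rest) /\ last W s = t /\ Forall (fun v => (v < n)%nat) W /\ chain P W.

Lemma path_is_walk n P s t p : is_path n P s t p -> is_walk n P s t p.
Proof. intros [h1 [h2 [_ [h4 h5]]]]. repeat split; auto. Qed.

Ltac solve_incl := let z := fresh in intros z; repeat progress (simpl; rewrite ?in_app_iff); tauto.

Section ShortestPaths.

Variables (n : nat) (P w : nat -> nat -> R) (s t : nat).
Hypothesis w_pos : forall i j, (i < n)%nat -> (j < n)%nat -> edge P i j -> 0 < w i j.

Lemma cost_nonneg l : chain P l -> Forall (fun v => (v < n)%nat) l -> 0 <= cost w l.
Proof.
  induction l as [| x [| y l] IH]; simpl; try lra.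
  intros [e c] F. inversion F as [| ? ? hx F']. inversion F'; subst.
  pose proof (w_pos x y hx ltac:(assumption) e). pose proof (IH c F'). simpl in *. lra.
Qed.

Lemma cost_pos x y l :
  chain P (x :: y :: l) -> Forall (fun v => (v < n)%nat) (x :: y :: l) -> 0 < cost w (x :: y :: l).
Proof.
  intros [e c] F. inversion F as [| ? ? hx F']. inversion F'; subst.
  pose proof (w_pos x y hx ltac:(assumption) e). pose proof (cost_nonneg _ c F'). simpl in *. lra.
Qed.

Lemma walk_remove_cycle a x b c :
  is_walk n P s t (a ++ x :: b ++ x :: c) ->
  is_walk n P s t (a ++ x :: c) /\ cost w (a ++ x :: c) < cost w (a ++ x :: b ++ x :: c).
Proof.
  intros [[rest Hs] [Hl [HF Hc]]].
  apply chain_app_cons in Hc as [Hc1 Hc2].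
  change (x :: b ++ x :: c) with ((x :: b) ++ x :: c) in Hc2, Hl |- *.
  apply chain_app_cons in Hc2 as [Hcyc Hc3].
  assert (Fcyc : Forall (fun v => (v < n)%nat) ((x :: b) ++ [x])).
  { apply (incl_Forall (l1 := a ++ (x :: b) ++ x :: c)); auto.
    solve_incl. }
  assert (Hcost : 0 < cost w ((x :: b) ++ [x])).
  { destruct b as [| y b]; [apply (cost_pos x x []) | apply (cost_pos x y (b ++ [x]))]; assumption. }
  repeat split.
  - destruct a as [| z a]; simpl in Hs |- *; injection Hs; intros; subst; eauto.
  - rewrite app_assoc, last_app_cons in Hl. now rewrite last_app_cons.
  - apply (incl_Forall (l1 := a ++ (x :: b) ++ x :: c)); auto.
    solve_incl.
  - apply chain_app_cons. auto.
  - change ((x :: b) ++ x :: c) with (x :: (b ++ x :: c)).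
    rewrite (cost_app_cons w a x c), (cost_app_cons w a x (b ++ x :: c)).
    change (x :: b ++ x :: c) with ((x :: b) ++ x :: c).
    rewrite (cost_app_cons w (x :: b) x c). lra.
Qed.

Lemma walk_to_path W :
  is_walk n P s t W -> exists p, is_path n P s t p /\ cost w p <= cost w W /\
    (~ NoDup W -> cost w p < cost w W).
Proof.
  induction W as [W IH] using (induction_ltof1 _ (@length nat)).
  intros HW. destruct (NoDup_dec Nat.eq_dec W) as [ND | ND].
  - exists W. destruct HW as [h1 [h2 [h3 h4]]]. repeat split; auto; [lra | tauto].
  - destruct (not_NoDup Nat.eq_decidable ND) as [x [a [b [c ->]]]].
    destruct (walk_remove_cycle a x b c HW) as [HW' Hlt].
    destruct (IH (a ++ x :: c)) as [p [hp [hc _]]]; auto.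
    + unfold ltof. rewrite !length_app. simpl. rewrite length_app. simpl. lia.
    + exists p. split; [exact hp | split; intros; lra].
Qed.

Lemma path_length_le p : is_path n P s t p -> (length p <= n)%nat.
Proof.
  intros [_ [_ [ND [F _]]]]. rewrite <- (length_seq n 0). apply NoDup_incl_length; auto.
  intros y hy. apply in_seq. rewrite Forall_forall in F. specialize (F y hy). lia.
Qed.

Lemma shortest_path_exists : (exists p, is_path n P s t p) -> exists p, shortest_path n P w s t p.
Proof.
  intros [p hp].
  assert (Hcand : forall q, is_path n P s t q -> In q (lists_lt (seq 0 n) (S n))).
  { intros q hq. apply In_lists_lt. split; [pose proof (path_length_le q hq); lia |].
    destruct hq as [_ [_ [_ [F _]]]]. intros y hy. apply in_seq.
    rewrite Forall_forall in F. specialize (F y hy). lia. }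
  destruct (finite_argmin _ (is_path n P s t) (cost w) p (Hcand p hp) hp) as [p0 [_ [h0 hmin]]].
  exists p0. split; auto.
Qed.

Lemma shortest_le_walk p0 W : shortest_path n P w s t p0 -> is_walk n P s t W -> cost w p0 <= cost w W.
Proof.
  intros [_ Hmin] HW. destruct (walk_to_path W HW) as [q [hq [hc _]]].
  specialize (Hmin q hq). lra.
Qed.

Lemma walk_min_cost_shortest p0 W :
  shortest_path n P w s t p0 -> is_walk n P s t W -> cost w W = cost w p0 -> shortest_path n P w s t W.
Proof.
  intros H0 HW E. destruct (walk_to_path W HW) as [q [hq [hc hlt]]].
  pose proof (proj2 H0 q hq).
  assert (ND : NoDup W) by (apply NNPP; intro nd; specialize (hlt nd); lra).
  destruct HW as [h1 [h2 [h3 h4]]]. split; [repeat split; auto |].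
  intros q' hq'. rewrite E. now apply H0.
Qed.

Lemma path_no_proper_extension p r : is_path n P s t p -> is_path n P s t (p ++ r) -> r = [].
Proof.
  intros [[p' Hp] [Lp _]] [_ [Lpr [ND _]]]. destruct r as [| z r]; auto. exfalso.
  assert (hp : p <> []) by (rewrite Hp; discriminate).
  rewrite (app_removelast_last s hp), Lp, <- app_assoc in ND. simpl in ND.
  apply NoDup_remove_2 in ND. apply ND, in_or_app. right.
  rewrite last_app_cons in Lpr. rewrite <- Lpr. apply last_In. discriminate.
Qed.

Lemma shortest_skip_lt A u v B y C :
  shortest_path n P w s t (A ++ u :: v :: B ++ y :: C) -> edge P u y -> w u v < w u y.
Proof.
  (* Jumping from u straight to y is a walk, and the skipped segment v .. y has positive cost. *)
  intros Hsp Huy.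
  pose proof (path_is_walk _ _ _ _ _ (proj1 Hsp)) as [[rest Hs] [Hl [HF Hc]]].
  apply chain_app_cons in Hc as [Hc1 [Huv Hc2]].
  change (v :: B ++ y :: C) with ((v :: B) ++ y :: C) in Hc2, Hl.
  apply chain_app_cons in Hc2 as [Hvy Hc3].
  assert (HW : is_walk n P s t (A ++ u :: y :: C)).
  { repeat split.
    - destruct A as [| z A]; simpl in Hs |- *; injection Hs; intros; subst; eauto.
    - rewrite last_app_cons in Hl |- *. change (last (y :: C) s = t).
      change (last ((v :: B) ++ y :: C) s = t) in Hl. now rewrite last_app_cons in Hl.
    - refine (incl_Forall _ HF). solve_incl.
    - apply chain_app_cons. split; auto. split; auto. }
  assert (Hseg : 0 < cost w ((v :: B) ++ [y])).
  { assert (F : Forall (fun x => (x < n)%nat) ((v :: B) ++ [y])) by (refine (incl_Forall _ HF); solve_incl).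
    destruct B as [| b B]; [apply (cost_pos v y []) | apply (cost_pos v b (B ++ [y]))]; assumption. }
  pose proof (shortest_le_walk _ _ Hsp HW).
  rewrite (cost_app_cons w A u), (cost_app_cons w A u (y :: C)) in H.
  change (cost w (u :: y :: C)) with (w u y + cost w (y :: C)) in H.
  change (cost w (u :: v :: B ++ y :: C)) with (w u v + cost w ((v :: B) ++ y :: C)) in H.
  rewrite (cost_app_cons w (v :: B) y C) in H. lra.
Qed.

Lemma shortest_branch_lt A u v1 v2 r1 r2 :
  shortest_path n P w s t (A ++ u :: v1 :: r1) -> shortest_path n P w s t (A ++ u :: v2 :: r2) ->
  v1 <> v2 -> In v2 (A ++ u :: v1 :: r1) -> w u v1 < w u v2.
Proof.
  intros S1 S2 nv Hin.
  destruct S2 as [[_ [_ [ND [_ Hc]]]] _].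
  assert (Hr : In v2 r1).
  { replace (A ++ u :: v2 :: r2) with ((A ++ [u]) ++ v2 :: r2) in ND by (rewrite <- app_assoc; auto).
    apply NoDup_remove_2 in ND. rewrite in_app_iff in Hin, ND. simpl in Hin, ND. rewrite in_app_iff in ND.
    simpl in ND. intuition. }
  destruct (in_split _ _ Hr) as [B [C ->]].
  apply (shortest_skip_lt A u v1 B v2 C S1).
  apply chain_app_cons in Hc. apply Hc.
Qed.

Lemma shortest_paths_differ p1 p2 :
  shortest_path n P w s t p1 -> shortest_path n P w s t p2 -> p1 <> p2 ->
  exists m, (In m p1 /\ ~ In m p2) \/ (In m p2 /\ ~ In m p1).
Proof.
  intros S1 S2 ne.
  pose proof S1 as [[[l1 E1] _] _]. pose proof S2 as [[[l2 E2] _] _]. subst p1 p2.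
  destruct (list_divergence s l1 l2 ne) as [[B [u [v1 [v2 [r1 [r2 [e1 [e2 nv]]]]]]]] | [r [hr [e | e]]]].
  - rewrite e1 in S1. rewrite e2 in S2.
    destruct (classic (In v2 (B ++ u :: v1 :: r1))) as [i2 | i2].
    2: { exists v2. right. rewrite e1, e2. split; auto. rewrite in_app_iff; simpl; auto. }
    destruct (classic (In v1 (B ++ u :: v2 :: r2))) as [i1 | i1].
    2: { exists v1. left. rewrite e1, e2. split; auto. rewrite in_app_iff; simpl; auto. }
    pose proof (shortest_branch_lt _ _ _ _ _ _ S1 S2 nv i2).
    pose proof (shortest_branch_lt _ _ _ _ _ _ S2 S1 (not_eq_sym nv) i1). lra.
  - exfalso. apply hr, (path_no_proper_extension (s :: l1)); [apply S1 | simpl; rewrite <- e; apply S2].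
  - exfalso. apply hr, (path_no_proper_extension (s :: l2)); [apply S2 | simpl; rewrite <- e; apply S1].
Qed.

Lemma shortest_paths_split_vertex p1 p2 :
  shortest_path n P w s t p1 -> shortest_path n P w s t p2 -> p1 <> p2 ->
  exists m, In m (Tlist n t) /\ (exists p, shortest_path n P w s t p /\ In m p) /\
            (exists p, shortest_path n P w s t p /\ ~ In m p).
Proof.
  intros S1 S2 ne.
  assert (Htr : forall p q m, shortest_path n P w s t p -> shortest_path n P w s t q ->
                 In m p -> ~ In m q -> In m (Tlist n t)).
  { intros p q m [[_ [_ [_ [F _]]]] _] [[[r ->] [Lq _]] _] hp hq. apply In_Tlist. split.
    - rewrite Forall_forall in F. auto.
    - intros ->. apply hq. rewrite <- Lq. apply last_In. discriminate. }
  destruct (shortest_paths_differ p1 p2 S1 S2 ne) as [m [[h1 h2] | [h2 h1]]];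
    exists m; repeat split; eauto.
Qed.

End ShortestPaths.

Lemma edge_cost_lower_bound n P w :
  (forall i j, (i < n)%nat -> (j < n)%nat -> edge P i j -> 0 < w i j) ->
  exists wmin, 0 < wmin /\ forall i j, (i < n)%nat -> (j < n)%nat -> edge P i j -> wmin <= w i j.
Proof.
  intros Hw. set (E := list_prod (seq 0 n) (seq 0 n)).
  assert (HE : forall i j, (i < n)%nat -> (j < n)%nat -> In (i, j) E)
    by (intros; apply in_prod; apply in_seq; lia).
  destruct (classic (exists ij, In ij E /\ edge P (fst ij) (snd ij))) as [[[i0 j0] [h0 e0]] | none].
  - destruct (finite_argmin E (fun ij => edge P (fst ij) (snd ij)) (fun ij => w (fst ij) (snd ij))
                (i0, j0) h0 e0) as [[i j] [hij [eij hmin]]].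
    apply in_prod_iff in hij as [hi hj]. apply in_seq in hi, hj.
    exists (w i j). split; [apply Hw; simpl in *; auto; lia |].
    intros i' j' hi' hj' e. apply (hmin (i', j')); auto.
  - exists 1. split; [lra |]. intros i j hi hj e. exfalso. apply none. exists (i, j). auto.
Qed.

Section WalkExpansion.

Variables (n t : nat) (P w : nat -> nat -> R) (a : R).

Definition PTT (h : nat -> R) (x : nat) : R := sumT n t (fun y => Palpha P w a x y * h y).

Definition absorb_walks (K x : nat) : R :=
  lsum (fun l => path_weight (Palpha P w a) (x :: l ++ [t])) (lists_lt (Tlist n t) K).

(* F_xm Q_m is the expected number of visits to m, counted on the event of absorption at t. *)
Definition visit_walks (m K x : nat) : R :=
  lsum (fun l => path_weight (Palpha P w a) (x :: l ++ [t]) * INR (count_occ Nat.eq_dec (x :: l) m))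
    (lists_lt (Tlist n t) K).

Lemma absorb_walks_Rpower K x :
  0 < a -> absorb_walks K x =
  lsum (fun l => path_weight P (x :: l ++ [t]) * Rpower a (cost w (x :: l ++ [t]))) (lists_lt (Tlist n t) K).
Proof. intros ha. apply lsum_ext. intros. now apply path_weight_Palpha. Qed.

Lemma visit_walks_Rpower m K x :
  0 < a -> visit_walks m K x =
  lsum (fun l => (path_weight P (x :: l ++ [t]) * INR (count_occ Nat.eq_dec (x :: l) m)) *
                 Rpower a (cost w (x :: l ++ [t]))) (lists_lt (Tlist n t) K).
Proof. intros ha. apply lsum_ext. intros. rewrite path_weight_Palpha by auto. ring. Qed.

Lemma PTT_minus f g x : PTT (fun y => f y - g y) x = PTT f x - PTT g x.
Proof.
  unfold PTT. rewrite !sumT_lsum, <- lsum_minus. apply lsum_ext. intros; ring.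
Qed.

Lemma PTT_mult_r f c x : PTT (fun y => f y * c) x = PTT f x * c.
Proof.
  unfold PTT. rewrite !sumT_lsum, Rmult_comm, <- lsum_scal. apply lsum_ext. intros; ring.
Qed.

Lemma absorb_walks_S K x : absorb_walks (S K) x = Palpha P w a x t + PTT (absorb_walks K) x.
Proof.
  unfold absorb_walks at 1. rewrite lsum_lists_lt_S. unfold PTT. rewrite sumT_lsum. simpl.
  rewrite Rmult_1_r. f_equal. apply lsum_ext. intros y _.
  unfold absorb_walks. rewrite <- lsum_scal. apply lsum_ext. reflexivity.
Qed.

Lemma visit_walks_S m K x :
  visit_walks m (S K) x = kdelta x m * absorb_walks (S K) x + PTT (visit_walks m K) x.
Proof.
  unfold visit_walks at 1, absorb_walks. rewrite !lsum_lists_lt_S. unfold PTT. rewrite sumT_lsum.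
  transitivity (kdelta x m * path_weight (Palpha P w a) (x :: [] ++ [t]) +
    lsum (fun y => kdelta x m * lsum (fun l => path_weight (Palpha P w a) (x :: (y :: l) ++ [t]))
                     (lists_lt (Tlist n t) K) + Palpha P w a x y * visit_walks m K y) (Tlist n t)).
  - f_equal; [rewrite INR_count_occ_cons; simpl; ring |].
    apply lsum_ext. intros y _. unfold visit_walks.
    rewrite <- !lsum_scal, <- lsum_plus. apply lsum_ext. intros l _.
    rewrite INR_count_occ_cons. simpl. ring.
  - rewrite lsum_plus, lsum_scal. ring.
Qed.

Variable r : R.
Hypothesis step_nonneg : forall x y, In x (Tlist n t) -> In y (Tlist n t) -> 0 <= Palpha P w a x y.
Hypothesis step_row_sum : forall x, In x (Tlist n t) -> sumT n t (Palpha P w a x) <= r.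

Lemma PTT_abs_le h B x :
  In x (Tlist n t) -> (forall y, In y (Tlist n t) -> Rabs (h y) <= B) -> Rabs (PTT h x) <= r * B.
Proof.
  intros hx hB. assert (0 <= B) by (pose proof (Rabs_pos (h x)); pose proof (hB x hx); lra).
  unfold PTT. rewrite sumT_lsum.
  apply Rle_trans with (lsum (fun y => B * Palpha P w a x y) (Tlist n t)).
  - apply lsum_abs_le. intros y hy. rewrite Rabs_mult, Rabs_pos_eq by auto.
    rewrite Rmult_comm. apply Rmult_le_compat_r; auto.
  - rewrite lsum_scal, <- sumT_lsum, Rmult_comm. apply Rmult_le_compat_r; auto.
Qed.

Hypothesis r_small : r <= 1/2.

Lemma harmonic_bound (v c : nat -> R) B :
  (forall x, In x (Tlist n t) -> v x = c x + PTT v x) ->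
  (forall x, In x (Tlist n t) -> Rabs (c x) <= B) ->
  forall x, In x (Tlist n t) -> Rabs (v x) <= 2 * B.
Proof.
  intros Hv Hc x hx.
  destruct (finite_argmin _ (fun _ => True) (fun y => - Rabs (v y)) x hx I) as [z [hzT [_ hz]]].
  assert (Hmax : forall y, In y (Tlist n t) -> Rabs (v y) <= Rabs (v z)).
  { intros y hy. specialize (hz y hy I). lra. }
  assert (Rabs (v z) <= B + r * Rabs (v z)).
  { rewrite (Hv z hzT) at 1. eapply Rle_trans; [apply Rabs_triang |].
    pose proof (Hc z hzT). pose proof (PTT_abs_le v _ z hzT Hmax). lra. }
  pose proof (Rabs_pos (v z)). pose proof (Hmax x hx). nra.
Qed.

Lemma remainder_bound (e d : nat -> nat -> R) M c :
  (forall x, In x (Tlist n t) -> Rabs (e O x) <= M) ->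
  (forall K x, In x (Tlist n t) -> e (S K) x = PTT (e K) x + d K x) ->
  (forall K x, In x (Tlist n t) -> Rabs (d K x) <= c * r ^ S K) ->
  forall K x, In x (Tlist n t) -> Rabs (e K x) <= (M + INR K * c) * r ^ K.
Proof.
  intros H0 Hrec Hd K. induction K as [| K IH]; intros x hx.
  - simpl. rewrite Rmult_0_l, Rplus_0_r, Rmult_1_r. auto.
  - rewrite Hrec by auto. eapply Rle_trans; [apply Rabs_triang |].
    pose proof (PTT_abs_le (e K) _ x hx IH). pose proof (Hd K x hx).
    replace ((M + INR (S K) * c) * r ^ S K) with (r * ((M + INR K * c) * r ^ K) + c * r ^ S K)
      by (rewrite S_INR; simpl; ring). lra.
Qed.

Hypothesis exit_bound : forall x, In x (Tlist n t) -> Rabs (Palpha P w a x t) <= 1.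

Section Absorption.

Variable Q : nat -> R.
Hypothesis Q_harmonic : forall x, In x (Tlist n t) -> Q x = PTT Q x + Palpha P w a x t.

Lemma absorb_bound x : In x (Tlist n t) -> Rabs (Q x) <= 2.
Proof.
  rewrite <- (Rmult_1_r 2). apply (harmonic_bound Q (fun x => Palpha P w a x t)); auto.
  intros y hy. rewrite Q_harmonic by auto. ring.
Qed.

Lemma absorb_walks_remainder K x : In x (Tlist n t) -> Rabs (Q x - absorb_walks K x) <= 2 * r ^ K.
Proof.
  intros hx. replace (2 * r ^ K) with ((2 + INR K * 0) * r ^ K) by ring.
  apply (remainder_bound (fun K x => Q x - absorb_walks K x) (fun _ _ => 0)); auto.
  - intros y hy. unfold absorb_walks. simpl. rewrite Rminus_0_r. now apply absorb_bound.
  - intros K' y hy. rewrite absorb_walks_S, PTT_minus, (Q_harmonic y hy). ring.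
  - intros. rewrite Rabs_R0. lra.
Qed.

Lemma visit_walks_remainder (N : nat -> R) m :
  (forall x, In x (Tlist n t) -> N x = kdelta x m * Q m + PTT N x) ->
  forall K x, In x (Tlist n t) -> Rabs (N x - visit_walks m K x) <= (4 + INR K * 2) * r ^ K.
Proof.
  intros HN.
  assert (HNb : forall x, In x (Tlist n t) -> Rabs (N x) <= 2 * 2).
  { apply (harmonic_bound N (fun x => kdelta x m * Q x)); auto.
    - intros x hx. rewrite <- kdelta_mult. auto.
    - intros x hx. rewrite Rabs_mult. pose proof (Rabs_kdelta_le x m). pose proof (absorb_bound x hx).
      pose proof (Rabs_pos (kdelta x m)). nra. }
  apply (remainder_bound (fun K x => N x - visit_walks m K x)
           (fun K x => kdelta x m * (Q x - absorb_walks (S K) x))).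
  - intros x hx. unfold visit_walks. simpl. rewrite Rminus_0_r. specialize (HNb x hx). lra.
  - intros K x hx. rewrite visit_walks_S, PTT_minus, (HN x hx), kdelta_mult. ring.
  - intros K x hx. rewrite Rabs_mult. pose proof (Rabs_kdelta_le x m).
    pose proof (absorb_walks_remainder (S K) x hx).
    pose proof (Rabs_pos (Q x - absorb_walks (S K) x)). nra.
Qed.

End Absorption.

End WalkExpansion.

Lemma fundamental_column n t P w F a x m :
  is_fundamental n t P w F -> 0 < a < 1 -> In x (Tlist n t) -> In m (Tlist n t) ->
  F a x m = kdelta x m + PTT n t P w a (fun y => F a y m) x.
Proof.
  intros HF ha hx hm. apply In_Tlist in hx as [hx hxt]. apply In_Tlist in hm as [hm hmt].
  destruct (HF a ha x m hx hm hxt hmt) as [E _].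
  rewrite sumT_lsum in E. erewrite lsum_ext in E by (intros k _; apply Rmult_minus_distr_r).
  rewrite lsum_minus, <- sumT_lsum, sumT_kdelta in E by (apply In_Tlist; auto).
  unfold PTT. rewrite sumT_lsum. lra.
Qed.

Lemma Rpower_antitone a e1 e2 : 0 < a < 1 -> e1 <= e2 -> Rpower a e2 <= Rpower a e1.
Proof.
  intros [h0 h1] he. unfold Rpower.
  assert (ln a < 0) by (rewrite <- ln_1; apply ln_increasing; lra).
  destruct (Req_dec e1 e2) as [<- | ne]; [lra |]. left. apply exp_increasing. nra.
Qed.

Lemma Rpower_le_half x a : 0 < x -> 0 < a < Rpower (1/2) (/ x) -> Rpower a x <= 1/2.
Proof.
  intros hx ha. left. replace (1/2) with (Rpower (Rpower (1/2) (/ x)) x).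
  - apply Rlt_Rpower_l; auto.
  - rewrite Rpower_mult, Rinv_l by lra. apply Rpower_1. lra.
Qed.

Lemma lim0plus_ext f g L : lim0plus f L -> (forall a, 0 < a < 1 -> f a = g a) -> lim0plus g L.
Proof.
  unfold lim0plus, limit1_in, limit_in. intros H E eps he.
  destruct (H eps he) as [del [hd Hf]]. exists del. split; auto.
  intros x [hx hdist]. rewrite <- E; auto.
Qed.

Lemma lim0plus_unique f L L' : lim0plus f L -> lim0plus f L' -> L = L'.
Proof.
  apply single_limit. intros del hd. exists (Rmin (del / 2) (1 / 2)).
  pose proof (Rmin_l (del / 2) (1 / 2)). pose proof (Rmin_r (del / 2) (1 / 2)).
  assert (0 < Rmin (del / 2) (1 / 2)) by (apply Rmin_pos; lra).
  unfold R_dist. rewrite Rminus_0_r, Rabs_pos_eq; lra.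
Qed.

Lemma lim0plus_const c : lim0plus (fun _ => c) c.
Proof.
  unfold lim0plus, limit1_in, limit_in. intros eps he. exists 1. split; [lra |].
  intros x _. simpl. unfold R_dist. rewrite Rminus_diag, Rabs_R0. auto.
Qed.

Lemma lim0plus_Rpower x : 0 < x -> lim0plus (fun a => Rpower a x) 0.
Proof.
  unfold lim0plus, limit1_in, limit_in. simpl. unfold R_dist. intros hx eps he.
  exists (Rpower eps (/ x)). split; [apply exp_pos |].
  intros a [ha hd]. rewrite Rminus_0_r, Rabs_pos_eq in hd by lra.
  rewrite Rminus_0_r, Rabs_pos_eq by (left; apply exp_pos).
  replace eps with (Rpower (Rpower eps (/ x)) x)
    by (rewrite Rpower_mult, Rinv_l by lra; apply Rpower_1; auto).
  apply Rlt_Rpower_l; auto. lra.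
Qed.

Lemma lim0plus_bound f M x d0 :
  0 < d0 -> 0 < x -> (forall a, 0 < a < 1 -> a < d0 -> Rabs (f a) <= M * Rpower a x) ->
  lim0plus f 0.
Proof.
  intros hd hx H. pose proof (lim0plus_Rpower x hx) as L.
  unfold lim0plus, limit1_in, limit_in in *. simpl in *. unfold R_dist in *. intros eps he.
  assert (hM : 0 < Rabs M + 1) by (pose proof (Rabs_pos M); lra).
  destruct (L (eps / (Rabs M + 1))) as [del [hdel Hl]]; [apply Rdiv_lt_0_compat; lra |].
  exists (Rmin d0 del). split; [now apply Rmin_pos |].
  intros a [ha hdist]. rewrite Rminus_0_r, Rabs_pos_eq in hdist by lra.
  pose proof (Rmin_l d0 del). pose proof (Rmin_r d0 del).
  specialize (Hl a ltac:(split; [auto | rewrite Rminus_0_r, Rabs_pos_eq; lra])).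
  rewrite Rminus_0_r, Rabs_pos_eq in Hl by (left; apply exp_pos).
  specialize (H a ha ltac:(lra)). rewrite Rminus_0_r.
  pose proof (exp_pos (x * ln a)). fold (Rpower a x) in *.
  assert (M * Rpower a x <= (Rabs M + 1) * Rpower a x)
    by (apply Rmult_le_compat_r; [lra | pose proof (Rle_abs M); lra]).
  apply (Rmult_lt_compat_l (Rabs M + 1)) in Hl; auto.
  replace ((Rabs M + 1) * (eps / (Rabs M + 1))) with eps in Hl by (field; lra). lra.
Qed.

Lemma lim0plus_gpoly {A} (L : list A) (c e : A -> R) D :
  (forall z, In z L -> c z <> 0 -> D <= e z) ->
  lim0plus (fun a => lsum (fun z => c z * Rpower a (e z)) L / Rpower a D)
    (lsum (fun z => if Req_EM_T (e z) D then c z else 0) L).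
Proof.
  induction L as [| z L IH]; intros H; simpl.
  - apply (lim0plus_ext (fun _ => 0)); [apply lim0plus_const |]. intros a _. unfold Rdiv. ring.
  - apply (lim0plus_ext (fun a => c z * Rpower a (e z - D) +
             lsum (fun z => c z * Rpower a (e z)) L / Rpower a D)).
    2: { intros a _. replace (e z) with ((e z - D) + D) at 2 by ring.
         rewrite Rpower_plus. field. apply Rgt_not_eq, exp_pos. }
    apply limit_plus; [| apply IH; intros; apply H; simpl; auto].
    destruct (Req_EM_T (c z) 0) as [c0 | c0].
    + rewrite c0. apply (lim0plus_ext (fun _ => 0)); [| intros; ring].
      destruct (Req_EM_T (e z) D); apply lim0plus_const.
    + pose proof (H z (or_introl eq_refl) c0).
      destruct (Req_EM_T (e z) D) as [ee | ee].
      * apply (lim0plus_ext (fun _ => c z)); [apply lim0plus_const |].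
        intros a _. rewrite ee, Rminus_diag. unfold Rpower. rewrite Rmult_0_l, exp_0. ring.
      * assert (hp : 0 < e z - D) by lra.
        pose proof (limit_mul _ _ _ _ _ 0 (lim0plus_const (c z)) (lim0plus_Rpower _ hp)) as Hm.
        rewrite Rmult_0_r in Hm. exact Hm.
Qed.

Lemma lim0plus_asymptotic {A} (f : R -> R) (L : list A) (c e : A -> R) D x M d0 :
  0 < d0 -> D < x -> (forall z, In z L -> c z <> 0 -> D <= e z) ->
  (forall a, 0 < a < 1 -> a < d0 ->
     Rabs (f a - lsum (fun z => c z * Rpower a (e z)) L) <= M * Rpower a x) ->
  lim0plus (fun a => f a / Rpower a D) (lsum (fun z => if Req_EM_T (e z) D then c z else 0) L).
Proof.
  intros hd hx He Hf.
  apply (lim0plus_ext (fun a => lsum (fun z => c z * Rpower a (e z)) L / Rpower a D +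
           (f a - lsum (fun z => c z * Rpower a (e z)) L) / Rpower a D)).
  2: { intros a _. field. apply Rgt_not_eq, exp_pos. }
  rewrite <- Rplus_0_r. apply limit_plus; [now apply lim0plus_gpoly |].
  apply (lim0plus_bound _ M (x - D) d0); [auto | lra |]. intros a ha hda.
  pose proof (exp_pos (D * ln a)) as hD. fold (Rpower a D) in hD.
  unfold Rdiv. rewrite Rabs_mult, Rabs_inv, (Rabs_pos_eq (Rpower a D)) by lra.
  apply (Rmult_le_reg_r (Rpower a D)); auto.
  rewrite Rmult_assoc, Rinv_l, Rmult_1_r by lra.
  rewrite Rmult_assoc, <- Rpower_plus. replace (x - D + D) with x by ring. auto.
Qed.

Definition through (m : nat) (W : list nat) : bool := existsb (Nat.eqb m) W.

Lemma through_spec m W : through m W = true <-> In m W.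
Proof.
  unfold through. rewrite existsb_exists. split.
  - intros [x [hx e]]. apply Nat.eqb_eq in e. now subst.
  - intros h. exists m. split; auto. apply Nat.eqb_refl.
Qed.

Section ShortestPathWeights.

Variables (n : nat) (P w : nat -> nat -> R) (s t : nat) (p0 : list nat) (K : nat).
Hypothesis s_lt : (s < n)%nat.
Hypothesis t_lt : (t < n)%nat.
Hypothesis s_neq_t : s <> t.
Hypothesis P_nonneg : forall i j, (i < n)%nat -> (j < n)%nat -> 0 <= P i j.
Hypothesis w_pos : forall i j, (i < n)%nat -> (j < n)%nat -> edge P i j -> 0 < w i j.
Hypothesis p0_shortest : shortest_path n P w s t p0.
Hypothesis K_large : (n < K)%nat.

Definition shortest_weight (b : list nat -> bool) : R :=
  lsum (fun l => if Req_EM_T (cost w (s :: l ++ [t])) (cost w p0) then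
                   if b (s :: l ++ [t]) then path_weight P (s :: l ++ [t]) else 0
                 else 0) (lists_lt (Tlist n t) K).

Lemma enumerated_walk_bounded l :
  In l (lists_lt (Tlist n t) K) -> Forall (fun v => (v < n)%nat) (s :: l ++ [t]).
Proof.
  intros hl. apply In_lists_lt in hl as [_ hl]. apply Forall_forall.
  intros x [<- | hx]; auto. apply in_app_iff in hx as [hx | [<- | []]]; auto.
  apply hl, In_Tlist in hx. tauto.
Qed.

Lemma enumerated_walk l :
  In l (lists_lt (Tlist n t) K) -> path_weight P (s :: l ++ [t]) <> 0 -> is_walk n P s t (s :: l ++ [t]).
Proof.
  intros hl hw. pose proof (enumerated_walk_bounded l hl) as F. repeat split; eauto.
  - change (s :: l ++ [t]) with ((s :: l) ++ [t]). apply last_last.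
  - now apply (chain_of_path_weight_neq0 n).
Qed.

Lemma shortest_path_enumerated p :
  shortest_path n P w s t p -> exists l, p = s :: l ++ [t] /\ In l (lists_lt (Tlist n t) K).
Proof.
  intros Sp. pose proof (path_length_le n P s t p (proj1 Sp)) as hlen.
  destruct Sp as [[[rest ->] [Lp [ND [F _]]]] _].
  destruct (exists_last (l := rest)) as [l [z ->]]; [intros ->; simpl in Lp; auto |].
  change (s :: l ++ [z]) with ((s :: l) ++ [z]) in Lp. rewrite last_last in Lp. subst z.
  exists l. split; auto. apply In_lists_lt. split.
  - simpl in hlen. rewrite length_app in hlen. simpl in hlen. lia.
  - intros x hx. apply In_Tlist. split.
    + rewrite Forall_forall in F. apply F. simpl. rewrite in_app_iff. auto.
    + intros ->. change (s :: l ++ [t]) with ((s :: l) ++ [t]) in ND.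
      apply NoDup_remove_2 in ND. apply ND. rewrite app_nil_r. now right.
Qed.

Lemma optimal_enumerated_walk_shortest l :
  In l (lists_lt (Tlist n t) K) -> cost w (s :: l ++ [t]) = cost w p0 ->
  path_weight P (s :: l ++ [t]) <> 0 -> shortest_path n P w s t (s :: l ++ [t]).
Proof.
  intros hl hc hw. apply (walk_min_cost_shortest n P w s t w_pos p0); auto.
  now apply enumerated_walk.
Qed.

Lemma enumerated_cost_ge l :
  In l (lists_lt (Tlist n t) K) -> path_weight P (s :: l ++ [t]) <> 0 ->
  cost w p0 <= cost w (s :: l ++ [t]).
Proof.
  intros hl hw. apply (shortest_le_walk n P w s t w_pos); auto. now apply enumerated_walk.
Qed.

Lemma shortest_weight_nonneg b : 0 <= shortest_weight b.
Proof.
  apply lsum_nonneg. intros l hl.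
  destruct (Req_EM_T _ _); [destruct (b _) |]; try lra.
  apply (path_weight_nonneg n); auto. now apply enumerated_walk_bounded.
Qed.

Lemma shortest_weight_neq0 b : shortest_weight b <> 0 <-> exists p, shortest_path n P w s t p /\ b p = true.
Proof.
  split.
  - intros h. destruct (lsum_neq0_term _ _ h) as [l [hl hne]].
    destruct (Req_EM_T _ _) as [hc |]; [| lra]. destruct (b _) eqn:hb; [| lra].
    exists (s :: l ++ [t]). split; auto. now apply optimal_enumerated_walk_shortest.
  - intros [p [Sp hb]]. destruct (shortest_path_enumerated p Sp) as [l [-> hl]].
    set (f := fun l => if Req_EM_T (cost w (s :: l ++ [t])) (cost w p0) then
                         if b (s :: l ++ [t]) then path_weight P (s :: l ++ [t]) else 0 else 0).
    assert (Hterm : f l <= shortest_weight b).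
    { apply (lsum_term_le f); auto. intros y hy. unfold f.
      destruct (Req_EM_T _ _); [destruct (b (s :: y ++ [t])) |]; try lra.
      apply (path_weight_nonneg n); auto. now apply enumerated_walk_bounded. }
    assert (Hfl : f l = path_weight P (s :: l ++ [t])).
    { unfold f. destruct (Req_EM_T _ _) as [| ne]; [now rewrite hb |].
      exfalso. apply ne. apply Rle_antisym; [apply Sp, p0_shortest | apply p0_shortest, Sp]. }
    destruct Sp as [[_ [_ [_ [_ Cp]]]] _]. pose proof (path_weight_pos P _ Cp). lra.
Qed.

Lemma shortest_weight_through_neq0 m :
  shortest_weight (through m) <> 0 <-> exists p, shortest_path n P w s t p /\ In m p.
Proof.
  rewrite shortest_weight_neq0. split; intros [p [Sp h]]; exists p; split; auto; now apply through_spec.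
Qed.

Lemma shortest_weight_avoid_neq0 m :
  shortest_weight (fun W => negb (through m W)) <> 0 <-> exists p, shortest_path n P w s t p /\ ~ In m p.
Proof.
  rewrite shortest_weight_neq0. split; intros [p [Sp h]]; exists p; split; auto;
    rewrite Bool.negb_true_iff, <- Bool.not_true_iff_false, through_spec in *; auto.
Qed.

Lemma shortest_weight_total_pos m :
  0 < shortest_weight (through m) + shortest_weight (fun W => negb (through m W)).
Proof.
  pose proof (shortest_weight_nonneg (through m)). pose proof (shortest_weight_nonneg (fun W => negb (through m W))).
  destruct (classic (In m p0)).
  - enough (shortest_weight (through m) <> 0) by lra. apply shortest_weight_through_neq0. eauto.
  - enough (shortest_weight (fun W => negb (through m W)) <> 0) by lra. apply shortest_weight_avoid_neq0. eauto.
Qed.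

Lemma absorb_coefficient m :
  lsum (fun l => if Req_EM_T (cost w (s :: l ++ [t])) (cost w p0) then path_weight P (s :: l ++ [t]) else 0)
    (lists_lt (Tlist n t) K)
  = shortest_weight (through m) + shortest_weight (fun W => negb (through m W)).
Proof.
  unfold shortest_weight. rewrite <- lsum_plus. apply lsum_ext. intros l _.
  destruct (Req_EM_T _ _); [destruct (through m _) |]; simpl; ring.
Qed.

Lemma visit_coefficient m :
  m <> t ->
  lsum (fun l => if Req_EM_T (cost w (s :: l ++ [t])) (cost w p0)
                 then path_weight P (s :: l ++ [t]) * INR (count_occ Nat.eq_dec (s :: l) m) else 0)
    (lists_lt (Tlist n t) K)
  = shortest_weight (through m).
Proof.
  intros hmt. unfold shortest_weight. apply lsum_ext. intros l hl.
  destruct (Req_EM_T _ _) as [hc |]; [| reflexivity].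
  destruct (Req_dec (path_weight P (s :: l ++ [t])) 0) as [z | nz].
  { rewrite z. destruct (through m _); ring. }
  pose proof (optimal_enumerated_walk_shortest l hl hc nz) as [[_ [_ [ND _]]] _].
  change (s :: l ++ [t]) with ((s :: l) ++ [t]) in ND |- *. apply NoDup_app_remove_r in ND.
  destruct (through m _) eqn:hb.
  - apply through_spec, in_app_iff in hb as [hb | [e | []]]; [| congruence].
    rewrite (proj1 (NoDup_count_occ' Nat.eq_dec _) ND m hb). simpl. ring.
  - assert (~ In m (s :: l)).
    { intros h. rewrite <- Bool.not_true_iff_false, through_spec, in_app_iff in hb. auto. }
    rewrite (proj1 (count_occ_not_In Nat.eq_dec _ m) H). simpl. ring.
Qed.

End ShortestPathWeights.

Section AvoidanceLimit.

Variables (n : nat) (P w : nat -> nat -> R) (s t : nat).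
Variables (F : R -> nat -> nat -> R) (Q : R -> nat -> R) (p0 : list nat) (wmin : R) (K : nat).
Hypothesis s_lt : (s < n)%nat.
Hypothesis t_lt : (t < n)%nat.
Hypothesis s_neq_t : s <> t.
Hypothesis P_nonneg : forall i j, (i < n)%nat -> (j < n)%nat -> 0 <= P i j.
Hypothesis P_stochastic : forall i, (i < n)%nat -> fsum n (P i) = 1.
Hypothesis w_pos : forall i j, (i < n)%nat -> (j < n)%nat -> edge P i j -> 0 < w i j.
Hypothesis F_fundamental : is_fundamental n t P w F.
Hypothesis Q_absorb : is_absorb_t n t P w Q.
Hypothesis p0_shortest : shortest_path n P w s t p0.
Hypothesis wmin_pos : 0 < wmin.
Hypothesis wmin_le : forall i j, (i < n)%nat -> (j < n)%nat -> edge P i j -> wmin <= w i j.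
Hypothesis K_large : (n < K)%nat.
Hypothesis K_cost : cost w p0 < wmin * INR K.

Lemma Palpha_nonneg a x y : (x < n)%nat -> (y < n)%nat -> 0 <= Palpha P w a x y.
Proof. intros hx hy. apply Rmult_le_pos; [auto | left; apply exp_pos]. Qed.

Lemma row_sum_Palpha_le a x : 0 < a < 1 -> (x < n)%nat -> fsum n (Palpha P w a x) <= Rpower a wmin.
Proof.
  intros ha hx. rewrite <- (Rmult_1_r (Rpower a wmin)), <- (P_stochastic x hx), !fsum_lsum, <- lsum_scal.
  apply lsum_le. intros y hy. apply in_seq in hy. unfold Palpha.
  destruct (P_nonneg x y hx ltac:(lia)) as [pos | z]; [| rewrite <- z; lra].
  rewrite Rmult_comm. apply Rmult_le_compat_r; [lra |].
  apply Rpower_antitone; auto. apply wmin_le; auto; lia.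
Qed.

Lemma sumT_Palpha_le a x :
  0 < a < 1 -> In x (Tlist n t) -> sumT n t (Palpha P w a x) <= Rpower a wmin.
Proof.
  intros ha hx. apply In_Tlist in hx as [hx _].
  eapply Rle_trans; [apply sumT_le_fsum | now apply row_sum_Palpha_le].
  intros y hy. now apply Palpha_nonneg.
Qed.

Lemma exit_Palpha_le a x :
  0 < a < 1 -> Rpower a wmin <= 1/2 -> In x (Tlist n t) -> Rabs (Palpha P w a x t) <= 1.
Proof.
  intros ha hr hx. apply In_Tlist in hx as [hx _].
  rewrite Rabs_pos_eq by (now apply Palpha_nonneg).
  pose proof (row_sum_Palpha_le a x ha hx).
  enough (Palpha P w a x t <= fsum n (Palpha P w a x)) by lra.
  apply fsum_term_le; auto. intros y hy. now apply Palpha_nonneg.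
Qed.

Lemma Rpower_wmin_pow a : 0 < a -> Rpower a (wmin * INR K) = Rpower a wmin ^ K.
Proof. intros ha. rewrite <- Rpower_mult. apply Rpower_pow, exp_pos. Qed.

Lemma absorb_expansion_error a :
  0 < a < 1 -> Rpower a wmin <= 1/2 ->
  Rabs (Q a s - lsum (fun l => path_weight P (s :: l ++ [t]) * Rpower a (cost w (s :: l ++ [t])))
                  (lists_lt (Tlist n t) K)) <= 2 * Rpower a (wmin * INR K).
Proof.
  intros ha hr. rewrite Rpower_wmin_pow, <- absorb_walks_Rpower by lra.
  apply (absorb_walks_remainder n t P w a); auto.
  - intros x y hx hy. apply In_Tlist in hx, hy. apply Palpha_nonneg; tauto.
  - intros x hx. now apply sumT_Palpha_le.
  - intros x hx. now apply exit_Palpha_le.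
  - intros x hx. apply In_Tlist in hx as [hx hxt]. now apply Q_absorb.
  - now apply In_Tlist.
Qed.

Lemma visit_expansion_error a m :
  0 < a < 1 -> Rpower a wmin <= 1/2 -> In m (Tlist n t) ->
  Rabs (F a s m * Q a m -
        lsum (fun l => (path_weight P (s :: l ++ [t]) * INR (count_occ Nat.eq_dec (s :: l) m)) *
                       Rpower a (cost w (s :: l ++ [t]))) (lists_lt (Tlist n t) K))
    <= (4 + INR K * 2) * Rpower a (wmin * INR K).
Proof.
  intros ha hr hm. rewrite Rpower_wmin_pow, <- visit_walks_Rpower by lra.
  apply (visit_walks_remainder n t P w a (Rpower a wmin)) with (Q := Q a) (N := fun x => F a x m * Q a m);
    auto.
  - intros x y hx hy. apply In_Tlist in hx, hy. apply Palpha_nonneg; tauto.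
  - intros x hx. now apply sumT_Palpha_le.
  - intros x hx. now apply exit_Palpha_le.
  - intros x hx. apply In_Tlist in hx as [hx hxt]. now apply Q_absorb.
  - intros x hx. rewrite PTT_mult_r, (fundamental_column n t P w F a x m); auto. ring.
  - now apply In_Tlist.
Qed.

Lemma absorb_limit :
  lim0plus (fun a => Q a s / Rpower a (cost w p0))
    (lsum (fun l => if Req_EM_T (cost w (s :: l ++ [t])) (cost w p0) then path_weight P (s :: l ++ [t]) else 0)
       (lists_lt (Tlist n t) K)).
Proof.
  apply (lim0plus_asymptotic _ _ _ _ _ (wmin * INR K) 2 (Rpower (1/2) (/ wmin)));
    [apply exp_pos | auto | intros l hl hw; now apply (enumerated_cost_ge n P w s t p0 K) |].
  intros a ha hd. apply absorb_expansion_error; auto. apply Rpower_le_half; lra.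
Qed.

Lemma visit_limit m :
  In m (Tlist n t) ->
  lim0plus (fun a => F a s m * Q a m / Rpower a (cost w p0))
    (lsum (fun l => if Req_EM_T (cost w (s :: l ++ [t])) (cost w p0)
                    then path_weight P (s :: l ++ [t]) * INR (count_occ Nat.eq_dec (s :: l) m) else 0)
       (lists_lt (Tlist n t) K)).
Proof.
  intros hm.
  apply (lim0plus_asymptotic _ _ _ _ _ (wmin * INR K) (4 + INR K * 2) (Rpower (1/2) (/ wmin)));
    [apply exp_pos | auto | |].
  - intros l hl hc. apply (enumerated_cost_ge n P w s t p0 K); auto. intros z. apply hc. rewrite z. ring.
  - intros a ha hd. apply visit_expansion_error; auto. apply Rpower_le_half; lra.
Qed.

Lemma Favoid_limit m :
  In m (Tlist n t) ->
  lim0plus (Favoid F Q s m)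
    (shortest_weight n P w s t p0 K (through m) /
     (shortest_weight n P w s t p0 K (through m) + shortest_weight n P w s t p0 K (fun W => negb (through m W)))).
Proof.
  intros hm. pose proof hm as [_ hmt]%In_Tlist.
  pose proof (shortest_weight_total_pos n P w s t p0 K s_lt t_lt s_neq_t P_nonneg w_pos p0_shortest K_large m)
    as Hpos.
  apply Rgt_not_eq in Hpos. rewrite <- (absorb_coefficient n P w s t p0 K m) in Hpos |- *.
  rewrite <- (visit_coefficient n P w s t p0 K) by auto.
  apply (lim0plus_ext (fun a => (F a s m * Q a m / Rpower a (cost w p0)) * / (Q a s / Rpower a (cost w p0)))).
  - apply limit_mul; [now apply visit_limit | apply limit_inv; [exact absorb_limit | exact Hpos]].
  - intros a _. unfold Favoid, Rdiv. rewrite Rinv_mult, Rinv_inv.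
    pose proof (exp_pos (cost w p0 * ln a)) as hD. fold (Rpower a (cost w p0)) in hD.
    transitivity (F a s m * Q a m * / Q a s * (Rpower a (cost w p0) * / Rpower a (cost w p0)));
      [ring | rewrite Rinv_r by lra; ring].
Qed.

End AvoidanceLimit.

Lemma exists_large_nat n x c : 0 < c -> exists K, (n < K)%nat /\ x < c * INR K.
Proof.
  intros hc. destruct (INR_unbounded (x / c)) as [N hN]. exists (S n + N)%nat. split; [lia |].
  rewrite plus_INR. pose proof (pos_INR (S n)).
  apply (Rmult_lt_compat_l c) in hN; auto. replace (c * (x / c)) with x in hN by (field; lra). nra.
Qed.

Lemma ratio_bounds x y :
  0 <= x -> 0 <= y -> 0 < x + y ->
  (0 < x / (x + y) <-> x <> 0) /\ (x / (x + y) < 1 <-> y <> 0).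
Proof.
  intros hx hy hxy.
  assert (E : 1 - x / (x + y) = y / (x + y)) by (field; lra).
  assert (hinv : 0 < / (x + y)) by (apply Rinv_0_lt_compat; lra).
  repeat split.
  - intros h ->. unfold Rdiv in h. lra.
  - intros h. apply Rdiv_lt_0_compat; lra.
  - intros h ->. unfold Rdiv in E. lra.
  - intros h. assert (0 < y / (x + y)) by (apply Rdiv_lt_0_compat; lra). lra.
Qed.

Lemma avoidance_limit_classification n P w s t F Q :
  (s < n)%nat -> (t < n)%nat -> s <> t ->
  (forall i j, (i < n)%nat -> (j < n)%nat -> 0 <= P i j) ->
  (forall i, (i < n)%nat -> fsum n (P i) = 1) ->
  (forall i j, (i < n)%nat -> (j < n)%nat -> edge P i j -> 0 < w i j) ->
  (exists p, is_path n P s t p) ->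
  is_fundamental n t P w F -> is_absorb_t n t P w Q ->
  forall m, In m (Tlist n t) ->
  exists L, lim0plus (Favoid F Q s m) L /\
    (0 < L <-> exists p, shortest_path n P w s t p /\ In m p) /\
    (L < 1 <-> exists p, shortest_path n P w s t p /\ ~ In m p).
Proof.
  intros hs ht hst HP Hs Hw Hpath HF HQ m hm.
  destruct (shortest_path_exists n P w s t Hpath) as [p0 Hp0].
  destruct (edge_cost_lower_bound n P w Hw) as [wmin [hwmin Hwmin]].
  (* K > n enumerates all shortest paths; wmin K > D makes the truncation error o(α^D). *)
  destruct (exists_large_nat n (cost w p0) wmin hwmin) as [K [hK HKc]].
  exists (shortest_weight n P w s t p0 K (through m) /
          (shortest_weight n P w s t p0 K (through m) +
           shortest_weight n P w s t p0 K (fun W => negb (through m W)))).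
  split; [now apply (Favoid_limit n P w s t F Q p0 wmin K) |].
  rewrite <- (shortest_weight_through_neq0 n P w s t p0 K), <- (shortest_weight_avoid_neq0 n P w s t p0 K)
    by auto.
  apply ratio_bounds; [apply shortest_weight_nonneg .. | apply shortest_weight_total_pos]; auto.
Qed.

Theorem mainTheorem4 :
  forall (n : nat) (P w : nat -> nat -> R) (s t : nat)
         (F : R -> nat -> nat -> R) (Q : R -> nat -> R),
    (s < n)%nat -> (t < n)%nat -> s <> t ->
    (forall i j, (i < n)%nat -> (j < n)%nat -> 0 <= P i j) ->
    (forall i, (i < n)%nat -> fsum n (P i) = 1) ->
    (forall i j, (i < n)%nat -> (j < n)%nat -> edge P i j -> 0 < w i j) ->
    (exists p, is_path n P s t p) ->
    is_fundamental n t P w F ->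
    is_absorb_t n t P w Q ->
    (* (a) *)
    (forall m L, (m < n)%nat -> m <> t -> lim0plus (Favoid F Q s m) L -> L = 0 ->
       forall p, shortest_path n P w s t p -> ~ In m p) /\
    (* (b) *)
    (forall m L, (m < n)%nat -> m <> t -> lim0plus (Favoid F Q s m) L -> L = 1 ->
       forall p, shortest_path n P w s t p -> In m p) /\
    (* (c) *)
    (forall m L, (m < n)%nat -> m <> t -> lim0plus (Favoid F Q s m) L -> 0 < L < 1 ->
       (exists p, shortest_path n P w s t p /\ In m p) /\
       (exists p, shortest_path n P w s t p /\ ~ In m p)) /\
    (* (d) *)
    ((exists p1 p2, shortest_path n P w s t p1 /\ shortest_path n P w s t p2 /\ p1 <> p2) <->
     (exists m L, (m < n)%nat /\ m <> t /\ lim0plus (Favoid F Q s m) L /\ 0 < L < 1)).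
Proof.
  intros n P w s t F Q hs ht hst HP Hs Hw Hpath HF HQ.
  pose proof (avoidance_limit_classification n P w s t F Q hs ht hst HP Hs Hw Hpath HF HQ) as Hcl.
  assert (Hlim : forall m L, (m < n)%nat -> m <> t -> lim0plus (Favoid F Q s m) L ->
            (0 < L <-> exists p, shortest_path n P w s t p /\ In m p) /\
            (L < 1 <-> exists p, shortest_path n P w s t p /\ ~ In m p)).
  { intros m L hm hmt hL. destruct (Hcl m (proj2 (In_Tlist n t m) (conj hm hmt))) as [L' [hL' H]].
    now rewrite (lim0plus_unique _ _ _ hL hL'). }
  split; [| split; [| split; [| split]]].
  - intros m L hm hmt hL -> p Sp ip.
    assert (0 < 0) by (apply (Hlim m 0 hm hmt hL); eauto). lra.
  - intros m L hm hmt hL -> p Sp. apply NNPP. intros nip.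
    assert (1 < 1) by (apply (Hlim m 1 hm hmt hL); eauto). lra.
  - intros m L hm hmt hL hL01. split; apply (Hlim m L hm hmt hL); lra.
  - intros [p1 [p2 [S1 [S2 ne]]]].
    destruct (shortest_paths_split_vertex n P w s t Hw p1 p2 S1 S2 ne) as [m [hm [Hin Hout]]].
    destruct (Hcl m hm) as [L [hL [H0 H1]]]. apply In_Tlist in hm as [hm hmt].
    exists m, L. repeat split; auto; [apply H0 | apply H1]; auto.
  - intros [m [L [hm [hmt [hL hL01]]]]].
    destruct (Hlim m L hm hmt hL) as [H0 H1].
    destruct (proj1 H0 (proj1 hL01)) as [p1 [S1 i1]]. destruct (proj1 H1 (proj2 hL01)) as [p2 [S2 i2]].
    exists p1, p2. split; [exact S1 | split; [exact S2 | intros ->; contradiction]].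
Qed.
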